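(* Let $f:\mathbb R^n\to\mathbb R^n$ satisfy the QUAD condition with constant $\delta>0$, let $\epsilon_1,\epsilon_2>0$, $0<p<1$, $q>1$, and let $s:[0,\infty)\to\mathbb R^n$ satisfy $\dot s=f(s)$. Consider $$\dot x=f(x)-\epsilon_1\mathrm{sig}^p(x-s)-\epsilon_2\mathrm{sig}^q(x-s),\qquad x(t)\in\mathbb R^n.$$ Let $\bar\alpha=\epsilon_1 2^{(1+p)/2}$ and $\bar\beta=\epsilon_2 n^{(1-q)/2}2^{(1+q)/2}$. If $\bar\alpha-2\delta>0$ and $\bar\beta-2\delta>0$, then for every initial condition and every solution, $x(t)=s(t)$ for all $t\ge T_{\max}=\frac{2}{(\bar\alpha-2\delta)(1-p)}+\frac{2}{(\bar\beta-2\delta)(q-1)}$.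
   Context: For $x\in\mathbb R^n$ and $r>0$, $\mathrm{sig}^r(x)=(\mathrm{sign}(x^1)|x^1|^r,\dots,\mathrm{sign}(x^n)|x^n|^r)^T$. QUAD condition with constant $\delta>0$: $(x-y)^T(f(x)-f(y))\le\delta(x-y)^T(x-y)$ for all $x,y\in\mathbb R^n$. *)

From Stdlib Require Import Reals.
From mathcomp Require Import ssreflect ssrbool eqtype ssrnat seq fintype.
Set Implicit Arguments.
Unset Strict Implicit.
Open Scope R_scope.

Definition vec (n : nat) := 'I_n -> R.

Definition vsum (n : nat) (g : 'I_n -> R) : R :=
  foldr Rplus 0 (map g (enum 'I_n)).

Definition dotv (n : nat) (x y : vec n) : R := vsum (fun i => x i * y i).

Definition vsub (n : nat) (x y : vec n) : vec n := fun i => x i - y i.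

Definition QUAD (n : nat) (f : vec n -> vec n) (delta : R) : Prop :=
  forall x y : vec n,
    dotv (vsub x y) (vsub (f x) (f y)) <= delta * dotv (vsub x y) (vsub x y).

Definition sigpow1 (r a : R) : R :=
  if Rlt_dec 0 a then Rpower a r
  else if Rlt_dec a 0 then - Rpower (- a) r else 0.

Definition sigpow (n : nat) (r : R) (x : vec n) : vec n :=
  fun i => sigpow1 r (x i).

Definition is_solution (n : nat) (F : R -> vec n -> vec n) (x : R -> vec n) : Prop :=
  (forall t, 0 < t -> forall i : 'I_n,
      derivable_pt_lim (fun u => x u i) t (F t (x t) i)) /\
  (forall i : 'I_n, forall eps, 0 < eps -> exists d, 0 < d /\
      forall t, 0 <= t < d -> Rabs (x t i - x 0 i) < eps).

(* The Lyapunov function V = |x - s|^2 / 2 satisfies, by the QUAD condition and the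
   power-sum inequalities (sum a_i)^r <= sum a_i^r (r <= 1) and
   n^(1-r) (sum a_i)^r <= sum a_i^r (r >= 1),
     V' <= 2 delta V - alpha V^((1+p)/2) - beta V^((1+q)/2).
   While V >= 1 this gives V' <= -(beta - 2 delta) V^((1+q)/2), so V^(-(q-1)/2) grows at
   rate (beta - 2 delta)(q-1)/2 and V drops to 1 within 2/((beta - 2 delta)(q-1)); while
   V <= 1 it gives V' <= -(alpha - 2 delta) V^((1+p)/2), so V^((1-p)/2) decreases at rate
   (alpha - 2 delta)(1-p)/2 and V vanishes within 2/((alpha - 2 delta)(1-p)) more. *)

From Stdlib Require Import Reals Lra Psatz.
From Coquelicot Require Import Coquelicot.
From mathcomp Require Import ssreflect ssrbool eqtype ssrnat seq fintype.
Open Scope R_scope.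

Lemma exp_le_exp x y : x <= y -> exp x <= exp y.
Proof. by case=> [/exp_increasing/Rlt_le | ->] //; apply: Rle_refl. Qed.

Lemma Rpower_pos x r : 0 < Rpower x r.
Proof. exact: exp_pos. Qed.

Lemma Rpower_1_l r : Rpower 1 r = 1.
Proof. by rewrite /Rpower ln_1 Rmult_0_r exp_0. Qed.

Lemma Rpower_le_1 w r : 0 < w <= 1 -> 0 <= r -> Rpower w r <= 1.
Proof. by move=> w01 r_ge0; rewrite -(Rpower_1_l r); apply: Rle_Rpower_l. Qed.

Lemma Rpower_lt_1 w r : 1 < w -> r < 0 -> Rpower w r < 1.
Proof. by move=> w_gt1 r_lt0; rewrite -(Rpower_O w); [apply: Rpower_lt | lra]. Qed.

Lemma Rpower_ge_self w r : 0 < w -> 0 <= (w - 1) * (r - 1) -> w <= Rpower w r.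
Proof.
move=> w_gt0 wr; rewrite -{1}(exp_ln w w_gt0) /Rpower; apply: exp_le_exp.
have [w_lt1 | [w1 | w_gt1]] := Rtotal_order w 1.
- have := ln_increasing w 1 w_gt0 w_lt1; rewrite ln_1; nra.
- by rewrite w1 ln_1; lra.
- have := ln_increasing 1 w Rlt_0_1 w_gt1; rewrite ln_1; nra.
Qed.

Lemma Rpower_opp_mul_le v d k r : 0 < v -> d <= - k * Rpower v r -> Rpower v (- r) * d <= - k.
Proof.
move=> v_gt0 d_le; apply: (Rle_trans _ (Rpower v (- r) * (- k * Rpower v r))).
  by apply: Rmult_le_compat_l => //; apply: Rlt_le; apply: Rpower_pos.
rewrite (Rmult_comm (- k)) -Rmult_assoc -Rpower_plus Rplus_opp_l Rpower_O // Rmult_1_l.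
exact: Rle_refl.
Qed.

(* [Rpower 0 r = exp (r * ln 0) = 1]; [rpow] is the real power with [0 ^ r = 0]. *)
Definition rpow (y r : R) : R := if Rlt_dec 0 y then Rpower y r else 0.

Lemma rpow_ge0 y r : 0 <= rpow y r.
Proof.
rewrite /rpow; case: Rlt_dec => y_pos /=; [apply: Rlt_le; apply: Rpower_pos | apply: Rle_refl].
Qed.

Lemma rpow_Rpower y r : 0 < y -> rpow y r = Rpower y r.
Proof. by rewrite /rpow; case: Rlt_dec. Qed.

Lemma rpow_le0 y r : y <= 0 -> rpow y r = 0.
Proof. by rewrite /rpow; case: Rlt_dec => y_pos //= y_le0; lra. Qed.

Lemma rpow_mul y z r : 0 < y -> 0 <= z -> rpow (y * z) r = Rpower y r * rpow z r.
Proof.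
move=> y_gt0 [z_gt0 | <-]; last by rewrite Rmult_0_r !rpow_le0 ?Rmult_0_r //; lra.
by rewrite !rpow_Rpower ?Rpower_mult_distr //; apply: Rmult_lt_0_compat.
Qed.

Lemma mul_sigpow1 e r : e * sigpow1 r e = rpow (e * e) ((1 + r) / 2).
Proof.
have sq (y : R) : 0 < y -> y * Rpower y r = Rpower (y * y) ((1 + r) / 2).
  move=> y_gt0; rewrite -Rpower_mult_distr // -Rpower_plus -{1}(Rpower_1 y y_gt0) -Rpower_plus.
  by congr Rpower; field.
rewrite /sigpow1; case: Rlt_dec => [e_gt0 | e_le0] /=; first by rewrite rpow_Rpower ?sq //; nra.
case: Rlt_dec => [e_lt0 | e_ge0] /=; last by rewrite rpow_le0; nra.
rewrite rpow_Rpower; last nra.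
by rewrite -(Rmult_opp_opp e e) -sq; [ring | lra].
Qed.

Definition sumR {I : Type} (g : I -> R) (l : seq I) : R := foldr Rplus 0 (map g l).

Lemma vsumE n (g : 'I_n -> R) : vsum g = sumR g (enum 'I_n).
Proof. by []. Qed.

Section ListSums.
Context {I : Type}.
Implicit Types (g h : I -> R) (l : seq I).

Lemma sumR_ext g h l : (forall i, g i = h i) -> sumR g l = sumR h l.
Proof. by move=> gh; rewrite /sumR; elim: l => //= a l ->; rewrite gh. Qed.

Lemma sumR_add g h l : sumR (fun i => g i + h i) l = sumR g l + sumR h l.
Proof. by rewrite /sumR; elim: l => /= [|a l ->]; ring. Qed.

Lemma sumR_sub g h l : sumR (fun i => g i - h i) l = sumR g l - sumR h l.
Proof. by rewrite /sumR; elim: l => /= [|a l ->]; ring. Qed.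

Lemma sumR_scal c g l : sumR (fun i => c * g i) l = c * sumR g l.
Proof. by rewrite /sumR; elim: l => /= [|a l ->]; ring. Qed.

Lemma sumR_const c l : sumR (fun _ => c) l = INR (size l) * c.
Proof.
elim: l => [|a l IH]; first by rewrite /sumR /=; ring.
by rewrite [size _]/= S_INR Rmult_plus_distr_r -IH Rmult_1_l Rplus_comm.
Qed.

Lemma sumR_le g h l : (forall i, g i <= h i) -> sumR g l <= sumR h l.
Proof. by move=> gh; rewrite /sumR; elim: l => /= [|a l IH]; [lra | have := gh a; lra]. Qed.

Lemma sumR_ge0 g l : (forall i, 0 <= g i) -> 0 <= sumR g l.
Proof. by move=> g_ge0; rewrite /sumR; elim: l => /= [|a l IH]; [lra | have := g_ge0 a; lra]. Qed.

Lemma derivable_pt_lim_sumR (g : I -> R -> R) (g' : I -> R) t l :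
  (forall i, derivable_pt_lim (g i) t (g' i)) ->
  derivable_pt_lim (fun u => sumR (fun i => g i u) l) t (sumR g' l).
Proof.
move=> dg; rewrite /sumR; elim: l => /= [|a l IH]; first exact: derivable_pt_lim_const.
exact: (derivable_pt_lim_plus (g a) (fun u => foldr Rplus 0 (map (fun i => g i u) l))).
Qed.

Lemma continuity_pt_sumR (g : I -> R -> R) t l :
  (forall i, continuity_pt (g i) t) -> continuity_pt (fun u => sumR (fun i => g i u) l) t.
Proof.
move=> cg; rewrite /sumR; elim: l => /= [|a l IH]; first exact: continuity_pt_const.
exact: (continuity_pt_plus (g a) (fun u => foldr Rplus 0 (map (fun i => g i u) l))).
Qed.

End ListSums.

Lemma sumR_term_le (I : eqType) (g : I -> R) l i :
  (forall j, 0 <= g j) -> i \in l -> g i <= sumR g l.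
Proof.
move=> g_ge0; elim: l => //= a l IH; rewrite in_cons /sumR /= -/(sumR g l).
case/orP=> [/eqP <- | /IH]; have := sumR_ge0 g l g_ge0; have := g_ge0 a; lra.
Qed.

Lemma vsum_term_le n (g : 'I_n -> R) i : (forall j, 0 <= g j) -> g i <= vsum g.
Proof. by move=> g_ge0; apply: sumR_term_le => //; rewrite mem_enum. Qed.

Lemma derivable_pt_lim_continuity_pt g t l : derivable_pt_lim g t l -> continuity_pt g t.
Proof. by move=> dg; apply: derivable_continuous_pt; exists l. Qed.

Lemma MVT_le (g g' : R -> R) a b c : a <= b ->
  (forall t, a <= t <= b -> continuity_pt g t) ->
  (forall t, a < t < b -> derivable_pt_lim g t (g' t)) ->
  (forall t, a < t < b -> g' t <= c) ->
  g b - g a <= c * (b - a).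
Proof.
move=> [a_lt_b | <-] cg dg g'_le; last by lra.
(* [MVT_gen] may return an endpoint, where [g'] is not controlled: clip it there. *)
pose g'' t := if Rlt_dec a t then if Rlt_dec t b then g' t else c else c.
have in_ab t : a < t < b -> g'' t = g' t.
  by move=> [a_t t_b]; rewrite /g''; case: Rlt_dec => //= _; case: Rlt_dec.
have g''_le t : g'' t <= c.
  rewrite /g''; case: Rlt_dec => a_t /=; last exact: Rle_refl.
  by case: Rlt_dec => t_b /=; [apply: g'_le | apply: Rle_refl].
have [t0 [_ ->]] : exists t0, Rmin a b <= t0 <= Rmax a b /\ g b - g a = g'' t0 * (b - a).
  apply: MVT_gen => t; rewrite Rmin_left ?Rmax_right; try lra; move=> t_ab.
  - by apply/is_derive_Reals; rewrite in_ab //; apply: dg.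
  - exact: cg.
by apply: Rmult_le_compat_r; [lra | apply: g''_le].
Qed.

Lemma MVT_ge (g g' : R -> R) a b c : a <= b ->
  (forall t, a <= t <= b -> continuity_pt g t) ->
  (forall t, a < t < b -> derivable_pt_lim g t (g' t)) ->
  (forall t, a < t < b -> c <= g' t) ->
  c * (b - a) <= g b - g a.
Proof.
move=> a_le_b cg dg g'_ge.
have cmg t : a <= t <= b -> continuity_pt (fun t => - g t) t.
  by move=> t_ab; apply: (continuity_pt_opp g); apply: cg.
have dmg t : a < t < b -> derivable_pt_lim (fun t => - g t) t (- g' t).
  by move=> t_ab; apply: (derivable_pt_lim_opp g); apply: dg.
have mg'_le t : a < t < b -> - g' t <= - c by move=> t_ab; have := g'_ge t t_ab; lra.
by have := MVT_le _ _ a b (- c) a_le_b cmg dmg mg'_le; lra.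
Qed.

Lemma Rpower_bernoulli w r : 0 < w -> 1 <= r -> 1 + r * (w - 1) <= Rpower w r.
Proof.
move=> w_gt0 r_ge1.
pose h u := Rpower u r - r * u.
pose h' u := r * Rpower u (r - 1) - r.
have dh u : 0 < u -> derivable_pt_lim h u (h' u).
  move=> u_gt0; apply: (derivable_pt_lim_minus (fun u => Rpower u r) (fun u => r * u)).
    exact: derivable_pt_lim_power.
  by have := derivable_pt_lim_scal id r u 1 (derivable_pt_lim_id u); rewrite Rmult_1_r.
have ch u : 0 < u -> continuity_pt h u.
  by move=> u_gt0; apply: derivable_pt_lim_continuity_pt (dh u u_gt0).
suff : h 1 <= h w by rewrite /h Rpower_1_l; lra.
have [w_ge1 | w_lt1] := Rle_lt_dec 1 w.
- suff : 0 * (w - 1) <= h w - h 1 by lra.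
  apply: (MVT_ge h h') => //.
  + by move=> t t_ab; apply: ch; lra.
  + by move=> t t_ab; apply: dh; lra.
  + move=> t t_ab; rewrite /h'.
    by have := Rle_Rpower t 0 (r - 1) (ltac:(lra)) (ltac:(lra)); rewrite Rpower_O; nra.
- suff : h 1 - h w <= 0 * (1 - w) by lra.
  apply: (MVT_le h h'); first lra.
  + by move=> t t_ab; apply: ch; lra.
  + by move=> t t_ab; apply: dh; lra.
  + move=> t t_ab; rewrite /h'.
    by have := Rpower_le_1 t (r - 1) (ltac:(lra)) (ltac:(lra)); nra.
Qed.

Lemma Rpower_sub1_mul m r : 0 < m -> Rpower m (r - 1) * m = Rpower m r.
Proof.
by move=> m_gt0; rewrite -{2}(Rpower_1 m m_gt0) -Rpower_plus; congr Rpower; ring.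
Qed.

Lemma rpow_tangent_le m r a : 0 < m -> 1 <= r -> 0 <= a ->
  Rpower m r + r * Rpower m (r - 1) * (a - m) <= rpow a r.
Proof.
move=> m_gt0 r_ge1 [a_gt0 | <-].
- have am_gt0 : 0 < a / m by apply: Rdiv_lt_0_compat.
  have -> : rpow a r = Rpower m r * Rpower (a / m) r.
    by rewrite rpow_Rpower // Rpower_mult_distr //; congr Rpower; field; lra.
  have -> : Rpower m (r - 1) = Rpower m r / m.
    by rewrite -(Rpower_sub1_mul m r m_gt0); field; lra.
  have := Rpower_bernoulli (a / m) r am_gt0 r_ge1.
  have := Rpower_pos m r.
  have -> : Rpower m r + r * (Rpower m r / m) * (a - m) = Rpower m r * (1 + r * (a / m - 1))
    by field; lra.
  by move=> mr_gt0 bern; apply: Rmult_le_compat_l; lra.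
- rewrite rpow_le0; last exact: Rle_refl.
  have -> : Rpower m r + r * Rpower m (r - 1) * (0 - m) = (1 - r) * Rpower m r.
    by rewrite -(Rpower_sub1_mul m r m_gt0); ring.
  by have := Rpower_pos m r; nra.
Qed.

Lemma vsum_rpow_concave n (a : 'I_n -> R) r : (forall i, 0 <= a i) -> r <= 1 ->
  rpow (vsum a) r <= vsum (fun i => rpow (a i) r).
Proof.
move=> a_ge0 r_le1.
have [A_le0 | A_gt0] := Rle_lt_dec (vsum a) 0.
  by rewrite rpow_le0 //; apply: sumR_ge0 => i; apply: rpow_ge0.
set A := vsum a in A_gt0 *.
have -> : rpow A r = vsum (fun i => Rpower A r / A * a i).
  by rewrite rpow_Rpower // vsumE sumR_scal -vsumE -/A; field; lra.
apply: sumR_le => i; have [ai_gt0 | ai0] := Rle_lt_or_eq_dec 0 (a i) (a_ge0 i); last first.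
  by rewrite -ai0 Rmult_0_r rpow_le0; apply: Rle_refl.
have aiA_gt0 : 0 < a i / A by apply: Rdiv_lt_0_compat.
have aiA_le1 : a i / A <= 1.
  by apply/(Rdiv_le_1 _ _ A_gt0); rewrite /A; apply: vsum_term_le.
have -> : Rpower A r / A * a i = Rpower A r * (a i / A) by field; lra.
have -> : rpow (a i) r = Rpower A r * Rpower (a i / A) r.
  by rewrite rpow_Rpower // Rpower_mult_distr //; congr Rpower; field; lra.
apply: Rmult_le_compat_l; first by apply: Rlt_le; apply: Rpower_pos.
by apply: Rpower_ge_self => //; nra.
Qed.

Lemma vsum_rpow_convex n (a : 'I_n -> R) r : (forall i, 0 <= a i) -> 1 <= r ->
  Rpower (INR n) (1 - r) * rpow (vsum a) r <= vsum (fun i => rpow (a i) r).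
Proof.
move=> a_ge0 r_ge1.
have [A_le0 | A_gt0] := Rle_lt_dec (vsum a) 0.
  by rewrite rpow_le0 // Rmult_0_r; apply: sumR_ge0 => i; apply: rpow_ge0.
set A := vsum a in A_gt0 *.
have n_gt0 : 0 < INR n.
  case: n a a_ge0 @A A_gt0 => [|k] a _ A; last by move=> _; apply: lt_0_INR; apply/ltP.
  by rewrite /A vsumE; case: (enum 'I_0) (size_enum_ord 0) => // /=; lra.
set m := A / INR n.
have m_gt0 : 0 < m by apply: Rdiv_lt_0_compat.
pose c := r * Rpower m (r - 1).
have mean : INR n * Rpower m r = Rpower (INR n) (1 - r) * rpow A r.
  rewrite rpow_Rpower // /m /Rdiv -Rpower_mult_distr //; last exact: Rinv_0_lt_compat.
  have -> : Rpower (/ INR n) r = Rpower (INR n) (- r).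
    by rewrite /Rpower ln_Rinv //; congr exp; ring.
  by rewrite /Rminus Rpower_plus Rpower_1 //; ring.
(* sum the tangent lines of [rpow _ r] at the mean [m] of the [a i] *)
rewrite -mean; apply: (Rle_trans _ (vsum (fun i => Rpower m r + c * (a i - m)))).
  rewrite vsumE (sumR_ext _ (fun i => (Rpower m r - c * m) + c * a i)); last by move=> i; ring.
  rewrite sumR_add sumR_const sumR_scal size_enum_ord -vsumE -/A /m; right; field; lra.
by apply: sumR_le => i; apply: rpow_tangent_le.
Qed.

Lemma derivable_pt_lim_Rpower_comp (V : R -> R) t d r : 0 < V t ->
  derivable_pt_lim V t d ->
  derivable_pt_lim (fun u => Rpower (V u) r) t (r * Rpower (V t) (r - 1) * d).
Proof.
move=> Vt_gt0 dV.
exact: (derivable_pt_lim_comp V (fun y => Rpower y r) t d _ dV (derivable_pt_lim_power _ r Vt_gt0)).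
Qed.

Lemma continuity_pt_Rpower_comp (V : R -> R) t r : 0 < V t ->
  continuity_pt V t -> continuity_pt (fun u => Rpower (V u) r) t.
Proof.
move=> Vt_gt0 cV; apply: (continuity_pt_comp V (fun y => Rpower y r)) => //.
exact: derivable_pt_lim_continuity_pt (derivable_pt_lim_power _ r Vt_gt0).
Qed.

Section PowerDecay.
Variables (V D : R -> R) (a b k r : R).
Hypothesis a_le_b : a <= b.
Hypothesis V_gt0 : forall t, a <= t <= b -> 0 < V t.
Hypothesis V_cont : forall t, a <= t <= b -> continuity_pt V t.
Hypothesis V_deriv : forall t, a < t < b -> derivable_pt_lim V t (D t).
Hypothesis D_le : forall t, a < t < b -> D t <= - k * Rpower (V t) r.

Let W t := Rpower (V t) (1 - r).
Let W' t := (1 - r) * (Rpower (V t) (- r) * D t).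

Let W_cont t : a <= t <= b -> continuity_pt W t.
Proof. by move=> t_ab; apply: continuity_pt_Rpower_comp; [apply: V_gt0 | apply: V_cont]. Qed.

Let W_deriv t : a < t < b -> derivable_pt_lim W t (W' t).
Proof.
move=> t_ab; have -> : W' t = (1 - r) * Rpower (V t) (1 - r - 1) * D t.
  by rewrite /W' (_ : 1 - r - 1 = - r) ?Rmult_assoc //; ring.
by apply: derivable_pt_lim_Rpower_comp; [apply: V_gt0; lra | apply: V_deriv].
Qed.

Let W'_factor_le t : a < t < b -> Rpower (V t) (- r) * D t <= - k.
Proof. by move=> t_ab; apply: Rpower_opp_mul_le; [apply: V_gt0; lra | apply: D_le]. Qed.

Lemma sublinear_decay : r < 1 -> W b - W a <= - ((1 - r) * k) * (b - a).
Proof.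
move=> r_lt1; apply: (MVT_le W W' a b _ a_le_b W_cont W_deriv) => t t_ab.
by have := W'_factor_le t t_ab; rewrite /W'; nra.
Qed.

Lemma superlinear_decay : 1 < r -> (r - 1) * k * (b - a) <= W b - W a.
Proof.
move=> r_gt1; apply: (MVT_ge W W' a b _ a_le_b W_cont W_deriv) => t t_ab.
by have := W'_factor_le t t_ab; rewrite /W'; nra.
Qed.

End PowerDecay.

Section FixedTimeStability.
Variables (V D : R -> R) (c alpha beta P Q : R).
Hypotheses (c_ge0 : 0 <= c) (c_lt_alpha : c < alpha) (c_lt_beta : c < beta).
Hypotheses (P_lt1 : P < 1) (Q_gt1 : 1 < Q).
Hypothesis V_cont : forall t, 0 <= t -> continuity_pt V t.
Hypothesis V_deriv : forall t, 0 < t -> derivable_pt_lim V t (D t).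
Hypothesis D_le :
  forall t, 0 < t -> D t <= c * V t - alpha * rpow (V t) P - beta * rpow (V t) Q.

Let D_le_small t : 0 < t -> 0 < V t <= 1 -> D t <= - (alpha - c) * Rpower (V t) P.
Proof.
move=> t_gt0 [Vt_gt0 Vt_le1]; have := D_le t t_gt0; rewrite !rpow_Rpower //.
have := Rpower_ge_self (V t) P Vt_gt0 (ltac:(nra)); have := Rpower_pos (V t) Q.
by nra.
Qed.

Let D_le_large t : 0 < t -> 1 <= V t -> D t <= - (beta - c) * Rpower (V t) Q.
Proof.
move=> t_gt0 Vt_ge1; have := D_le t t_gt0; rewrite !rpow_Rpower; try lra.
have := Rpower_ge_self (V t) Q (ltac:(lra)) (ltac:(nra)); have := Rpower_pos (V t) P.
by nra.
Qed.

Let D_le0 t : 0 < t -> D t <= 0.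
Proof.
move=> t_gt0; have [Vt_le0 | Vt_gt0] := Rle_lt_dec (V t) 0.
  by have := D_le t t_gt0; rewrite !rpow_le0 //; nra.
have [Vt_le1 | Vt_gt1] := Rle_lt_dec (V t) 1.
  by have := D_le_small t t_gt0 (conj Vt_gt0 Vt_le1); have := Rpower_pos (V t) P; nra.
by have := D_le_large t t_gt0 (Rlt_le _ _ Vt_gt1); have := Rpower_pos (V t) Q; nra.
Qed.

Let V_nonincreasing a b : 0 <= a <= b -> V b <= V a.
Proof.
move=> [a_ge0 a_le_b].
have V_cont_ab t : a <= t <= b -> continuity_pt V t by move=> t_ab; apply: V_cont; lra.
have V_deriv_ab t : a < t < b -> derivable_pt_lim V t (D t) by move=> t_ab; apply: V_deriv; lra.
have D_le0_ab t : a < t < b -> D t <= 0 by move=> t_ab; apply: D_le0; lra.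
by have := MVT_le V D a b 0 a_le_b V_cont_ab V_deriv_ab D_le0_ab; lra.
Qed.

Let V_le1_within : exists t1, 0 <= t1 <= 1 / ((beta - c) * (Q - 1)) /\ V t1 <= 1.
Proof.
set T := 1 / ((beta - c) * (Q - 1)).
have T_gt0 : 0 < T by apply: Rdiv_lt_0_compat; [lra | apply: Rmult_lt_0_compat; lra].
have [VT_le1 | VT_gt1] := Rle_lt_dec (V T) 1; first by exists T; split; [lra |].
exfalso; have V_gt1 t : 0 <= t <= T -> 1 < V t.
  by move=> t_0T; have := V_nonincreasing t T t_0T; lra.
have V_pos t : 0 <= t <= T -> 0 < V t by move=> t_0T; have := V_gt1 t t_0T; lra.
have V_cont_0T t : 0 <= t <= T -> continuity_pt V t by move=> t_0T; apply: V_cont; lra.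
have V_deriv_0T t : 0 < t < T -> derivable_pt_lim V t (D t) by move=> t_0T; apply: V_deriv; lra.
have D_le_0T t : 0 < t < T -> D t <= - (beta - c) * Rpower (V t) Q.
  by move=> t_0T; apply: D_le_large; [lra | have := V_gt1 t; lra].
have := superlinear_decay V D 0 T (beta - c) Q (Rlt_le _ _ T_gt0)
          V_pos V_cont_0T V_deriv_0T D_le_0T Q_gt1.
have -> : (Q - 1) * (beta - c) * (T - 0) = 1 by rewrite /T; field; lra.
have := Rpower_lt_1 (V T) (1 - Q) VT_gt1 (ltac:(lra)); have := Rpower_pos (V 0) (1 - Q).
lra.
Qed.

Let V_le0_after t1 t : 0 <= t1 -> V t1 <= 1 ->
  t1 + 1 / ((alpha - c) * (1 - P)) <= t -> V t <= 0.
Proof.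
set T := 1 / ((alpha - c) * (1 - P)) => t1_ge0 Vt1_le1 t_ge.
have T_gt0 : 0 < T by apply: Rdiv_lt_0_compat; [lra | apply: Rmult_lt_0_compat; lra].
have [// | Vt_gt0] := Rle_lt_dec (V t) 0; exfalso.
have V_01 u : t1 <= u <= t -> 0 < V u <= 1.
  move=> u_t1t; have := V_nonincreasing u t (ltac:(lra)).
  by have := V_nonincreasing t1 u (ltac:(lra)); lra.
have V_pos u : t1 <= u <= t -> 0 < V u by move=> u_t1t; have := V_01 u u_t1t; lra.
have V_cont_t1t u : t1 <= u <= t -> continuity_pt V u by move=> u_t1t; apply: V_cont; lra.
have V_deriv_t1t u : t1 < u < t -> derivable_pt_lim V u (D u) by move=> u_t1t; apply: V_deriv; lra.
have D_le_t1t u : t1 < u < t -> D u <= - (alpha - c) * Rpower (V u) P.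
  by move=> u_t1t; apply: D_le_small; [lra | apply: V_01; lra].
have := sublinear_decay V D t1 t (alpha - c) P (ltac:(lra))
          V_pos V_cont_t1t V_deriv_t1t D_le_t1t P_lt1.
have : (1 - P) * (alpha - c) * T <= (1 - P) * (alpha - c) * (t - t1).
  by apply: Rmult_le_compat_l; [nra | lra].
have -> : (1 - P) * (alpha - c) * T = 1 by rewrite /T; field; lra.
have := Rpower_le_1 (V t1) (1 - P) (V_01 t1 (ltac:(lra))) (ltac:(lra)).
have := Rpower_pos (V t) (1 - P).
lra.
Qed.

Lemma fixed_time_stability t :
  1 / ((alpha - c) * (1 - P)) + 1 / ((beta - c) * (Q - 1)) <= t -> V t <= 0.
Proof.
move=> t_ge; have [t1 [t1_0T Vt1_le1]] := V_le1_within.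
by apply: (V_le0_after t1) => //; lra.
Qed.

End FixedTimeStability.

(* A solution lives on [0, oo); freezing it at its initial value for [t < 0] turns
   right-continuity at [0] into continuity. *)
Lemma solution_derivable n F (y : R -> vec n) t i : is_solution F y -> 0 < t ->
  derivable_pt_lim (fun u => y (Rmax u 0) i) t (F t (y t) i).
Proof.
case=> y_deriv _ t_gt0.
apply: (derivable_pt_lim_locally_ext (fun u => y u i) _ t 0 (2 * t)); first lra.
  by move=> u u_0; rewrite Rmax_left //; lra.
exact: y_deriv.
Qed.

Lemma solution_continuous n F (y : R -> vec n) t i : is_solution F y -> 0 <= t ->
  continuity_pt (fun u => y (Rmax u 0) i) t.
Proof.
move=> y_sol [t_gt0 | <-].
  exact: derivable_pt_lim_continuity_pt (solution_derivable n F y t i y_sol t_gt0).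
case: y_sol => _ /(_ i) y_cont0 eps eps_gt0.
have [d [d_gt0 y_near]] := y_cont0 eps eps_gt0.
exists d; split => // u [_ /= u_near]; rewrite /R_dist (Rmax_left 0 0) ?Rminus_0_r in u_near *;
  last exact: Rle_refl.
apply: y_near; split; first exact: Rmax_r.
by apply: Rmax_lub_lt => //; have := Rabs_def2 _ _ u_near; lra.
Qed.

Lemma continuity_pt_dotv_self n (e : R -> vec n) t :
  (forall i, continuity_pt (fun u => e u i) t) ->
  continuity_pt (fun u => dotv (e u) (e u)) t.
Proof.
move=> ce; apply: (continuity_pt_sumR (fun i u => e u i * e u i)) => i.
exact: (continuity_pt_mult (fun u => e u i) (fun u => e u i)).
Qed.

Lemma derivable_pt_lim_dotv_half n (e : R -> vec n) (e' : vec n) t :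
  (forall i, derivable_pt_lim (fun u => e u i) t (e' i)) ->
  derivable_pt_lim (fun u => dotv (e u) (e u) / 2) t (dotv (e t) e').
Proof.
move=> de; pose d2 := sumR (fun i => e' i * e t i + e t i * e' i) (enum 'I_n).
have -> : dotv (e t) e' = d2 * / 2 + dotv (e t) (e t) * 0.
  rewrite /d2 (sumR_ext _ (fun i => 2 * (e t i * e' i))); last by move=> i; ring.
  by rewrite sumR_scal /dotv vsumE; field.
apply: (derivable_pt_lim_mult (fun u => dotv (e u) (e u)) (fct_cte (/ 2))).
  apply: (derivable_pt_lim_sumR (fun i u => e u i * e u i)) => i.
  exact: (derivable_pt_lim_mult (fun u => e u i) (fun u => e u i)).
exact: derivable_pt_lim_const.
Qed.

Section SynchronizationError.
Variables (n : nat) (f : vec n -> vec n) (delta eps1 eps2 p q : R) (s x : R -> vec n).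

Definition coupled_field (t : R) (v : vec n) : vec n :=
  fun i => f v i - eps1 * sigpow p (vsub v (s t)) i - eps2 * sigpow q (vsub v (s t)) i.

Definition sync_err (u : R) : vec n := vsub (x (Rmax u 0)) (s (Rmax u 0)).

Definition lyap (u : R) : R := dotv (sync_err u) (sync_err u) / 2.

Definition lyap_deriv (u : R) : R :=
  dotv (vsub (x u) (s u)) (vsub (coupled_field u (x u)) (f (s u))).

Lemma lyap_ge0 t : 0 <= lyap t.
Proof.
have : 0 <= dotv (sync_err t) (sync_err t) by apply: sumR_ge0 => i; nra.
by rewrite /lyap; lra.
Qed.

Lemma err_sq_le_lyap t i : 0 <= t -> (x t i - s t i) * (x t i - s t i) <= 2 * lyap t.
Proof.
move=> t_ge0; have := vsum_term_le n (fun j => sync_err t j * sync_err t j) i (fun j => ltac:(nra)).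
by rewrite /lyap /dotv /sync_err /vsub Rmax_left //; lra.
Qed.

Hypothesis s_sol : is_solution (fun _ v => f v) s.
Hypothesis x_sol : is_solution coupled_field x.

Lemma lyap_continuous t : 0 <= t -> continuity_pt lyap t.
Proof.
move=> t_ge0; have c_dot : continuity_pt (fun u => dotv (sync_err u) (sync_err u)) t.
  apply: (continuity_pt_dotv_self n sync_err) => i.
  exact: (continuity_pt_minus _ _ t (solution_continuous n _ x t i x_sol t_ge0)
                                    (solution_continuous n _ s t i s_sol t_ge0)).
have c_half : continuity_pt (fct_cte (/ 2)) t.
  by apply: continuity_pt_const => ? ?.
exact (continuity_pt_mult _ _ t c_dot c_half).
Qed.

Lemma lyap_derivable t : 0 < t -> derivable_pt_lim lyap t (lyap_deriv t).
Proof.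
move=> t_gt0; have -> : lyap_deriv t = dotv (sync_err t) (vsub (coupled_field t (x t)) (f (s t))).
  by rewrite /lyap_deriv /sync_err Rmax_left //; lra.
apply: (derivable_pt_lim_dotv_half n sync_err) => i.
exact (derivable_pt_lim_minus _ _ t _ _ (solution_derivable n _ x t i x_sol t_gt0)
                                          (solution_derivable n _ s t i s_sol t_gt0)).
Qed.

Hypothesis f_quad : QUAD f delta.
Hypotheses (eps1_ge0 : 0 <= eps1) (eps2_ge0 : 0 <= eps2) (p_le1 : p <= 1) (q_ge1 : 1 <= q).

Lemma lyap_deriv_le t : 0 < t ->
  lyap_deriv t <= 2 * delta * lyap t
    - eps1 * Rpower 2 ((1 + p) / 2) * rpow (lyap t) ((1 + p) / 2)
    - eps2 * Rpower (INR n) ((1 - q) / 2) * Rpower 2 ((1 + q) / 2) * rpow (lyap t) ((1 + q) / 2).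
Proof.
move=> t_gt0.
set e := vsub (x t) (s t); set P := (1 + p) / 2; set Q := (1 + q) / 2.
have two_lyap : 2 * lyap t = dotv e e.
  by rewrite /lyap /sync_err Rmax_left; [rewrite -/e; field | lra].
have sq_ge0 i : 0 <= e i * e i by nra.
have derivE : lyap_deriv t = dotv e (vsub (f (x t)) (f (s t)))
    - eps1 * vsum (fun i => rpow (e i * e i) P) - eps2 * vsum (fun i => rpow (e i * e i) Q).
  rewrite /lyap_deriv -/e /dotv !vsumE -!sumR_scal -!sumR_sub; apply: sumR_ext => i.
  by rewrite -!mul_sigpow1 /coupled_field /sigpow -/e /vsub; ring.
have sum_p : Rpower 2 P * rpow (lyap t) P <= vsum (fun i => rpow (e i * e i) P).
  rewrite -rpow_mul ?two_lyap; [| lra | exact: lyap_ge0].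
  by apply: vsum_rpow_concave => //; rewrite /P; lra.
have sum_q : Rpower (INR n) ((1 - q) / 2) * (Rpower 2 Q * rpow (lyap t) Q)
             <= vsum (fun i => rpow (e i * e i) Q).
  rewrite -rpow_mul ?two_lyap; [| lra | exact: lyap_ge0].
  rewrite (_ : (1 - q) / 2 = 1 - Q); last by rewrite /Q; field.
  by apply: vsum_rpow_convex => //; rewrite /Q; lra.
have drift := f_quad (x t) (s t); rewrite -/e -two_lyap in drift.
have := Rmult_le_compat_l eps1 _ _ eps1_ge0 sum_p.
have := Rmult_le_compat_l eps2 _ _ eps2_ge0 sum_q.
rewrite derivE; lra.
Qed.

End SynchronizationError.

Theorem theorem3 (n : nat) (f : vec n -> vec n) (delta eps1 eps2 p q : R)
  (s x : R -> vec n) :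
  0 < delta -> QUAD f delta ->
  0 < eps1 -> 0 < eps2 -> 0 < p -> p < 1 -> 1 < q ->
  is_solution (fun _ v => f v) s ->
  is_solution
    (fun t v => fun i =>
       f v i - eps1 * sigpow p (vsub v (s t)) i
             - eps2 * sigpow q (vsub v (s t)) i) x ->
  let alpha := eps1 * Rpower 2 ((1 + p) / 2) in
  let beta := eps2 * Rpower (INR n) ((1 - q) / 2) * Rpower 2 ((1 + q) / 2) in
  alpha - 2 * delta > 0 -> beta - 2 * delta > 0 ->
  forall t, t >= 2 / ((alpha - 2 * delta) * (1 - p))
                 + 2 / ((beta - 2 * delta) * (q - 1)) ->
  forall i : 'I_n, x t i = s t i.
Proof.
move=> delta_gt0 quad eps1_gt0 eps2_gt0 _ p_lt1 q_gt1 s_sol x_sol alpha beta alpha_gt beta_gt t.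
have -> : 2 / ((alpha - 2 * delta) * (1 - p)) = 1 / ((alpha - 2 * delta) * (1 - (1 + p) / 2)).
  by field; lra.
have -> : 2 / ((beta - 2 * delta) * (q - 1)) = 1 / ((beta - 2 * delta) * ((1 + q) / 2 - 1)).
  by field; lra.
move=> t_ge i.
have t_gt0 : 0 < t.
  have := Rdiv_lt_0_compat 1 ((alpha - 2 * delta) * (1 - (1 + p) / 2)) Rlt_0_1 ltac:(nra).
  have := Rdiv_lt_0_compat 1 ((beta - 2 * delta) * ((1 + q) / 2 - 1)) Rlt_0_1 ltac:(nra).
  lra.
have lyap_le0 : lyap n s x t <= 0.
  apply: (fixed_time_stability _ (lyap_deriv n f eps1 eps2 p q s x) (2 * delta) alpha beta
            ((1 + p) / 2) ((1 + q) / 2)); try lra.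
  - exact: (lyap_continuous n f eps1 eps2 p q s x s_sol x_sol).
  - exact: (lyap_derivable n f eps1 eps2 p q s x s_sol x_sol).
  - by apply: lyap_deriv_le => //; lra.
by have := err_sq_le_lyap n s x t i (Rlt_le _ _ t_gt0); nra.
Qed.
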